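(* Let $G$ be a graph on $d+2$ vertices whose adjacency matrix has second largest eigenvalue $\lambda_2$. If $G$ has a spherical representation in $\mathbb{R}^d$ with distance ratio $k$, then $k = \sqrt{\frac{1}{\lambda_2}+1}$; in particular $\lambda_2 > 0$.
   Context: Graphs are finite and simple; adjacency eigenvalues are listed with multiplicity as $\lambda_1\geq\lambda_2\geq\cdots$. A finite set $S\subset\mathbb{R}^d$ is a 2-distance set if $\{\|p-q\| : p,q\in S, p\neq q\}$ has exactly two elements $\alpha_1>\alpha_2$; its distance ratio is $k=\alpha_1/\alpha_2$; its associated graph has vertex set $S$ with $p,q$ adjacent iff $\|p-q\|=\alpha_1$. $G$ has a spherical representation in $\mathbb{R}^d$ with ratio $k$ if some 2-distance set in $\mathbb{R}^d$ with ratio $k$, lying on a $(d-1)$-dimensional sphere, has associated graph $G$. *)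

From HB Require Import structures.
From mathcomp Require Import all_boot all_order all_algebra.
From mathcomp Require Import reals.
Set Implicit Arguments. Unset Strict Implicit. Unset Printing Implicit Defensive.
Import Order.TTheory GRing.Theory Num.Theory.
Local Open Scope ring_scope.

Definition simple_graph (n : nat) (e : rel 'I_n) : Prop :=
  symmetric e /\ irreflexive e.

Definition adjmx (R : nzRingType) (n : nat) (e : rel 'I_n) : 'M[R]_n :=
  \matrix_(i, j) (e i j)%:R.

(* [s] is the list of eigenvalues of the square matrix A, listed with
   multiplicity in nonincreasing order: s is sorted (>=) and the
   characteristic polynomial of A splits as prod_(x <- s) (X - x). *)
Definition eigenvalues_desc (R : realType) (n : nat) (A : 'M[R]_n) (s : seq R) : Prop :=
  sorted (fun x y : R => y <= x) s /\
  char_poly A = \prod_(x <- s) ('X - x%:P).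

Definition edist (R : realType) (d : nat) (x y : 'rV[R]_d) : R :=
  Num.sqrt (\sum_(i < d) (x 0 i - y 0 i) ^+ 2).

(* G = (('I_n), e) has a spherical representation in R^d with ratio k:
   there is an injective placement p of the vertices (so the image S is a
   copy of the vertex set) such that S is a 2-distance set with distances
   a1 > a2 (both attained), ratio k = a1/a2, u ~ v iff |p u - p v| = a1,
   and S lies on a sphere (centre c, radius r > 0) in R^d. *)
Definition spherical_rep (R : realType) (n : nat) (e : rel 'I_n) (d : nat) (k : R) : Prop :=
  exists (p : 'I_n -> 'rV[R]_d) (a1 a2 : R),
    injective p /\
        a2 < a1 /\
        (forall u v, u != v -> edist (p u) (p v) = a1 \/ edist (p u) (p v) = a2) /\
        (exists u v, u != v /\ edist (p u) (p v) = a1) /\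
        (exists u v, u != v /\ edist (p u) (p v) = a2) /\
        k = a1 / a2 /\
        (forall u v, u != v -> (e u v <-> edist (p u) (p v) = a1)) /\
        (exists (c : 'rV[R]_d) (r : R), 0 < r /\ forall v, edist (p v) c = r).

(* Let p_v be the points, c the centre, Q the matrix with rows p_v - c, J the all-ones
   matrix and A the adjacency matrix.  Polarisation gives the Gram matrix
     Q Q^T = r^2 J - (a2^2/2) (J - I) - ((a1^2 - a2^2)/2) A,
   which is positive semidefinite.  On the hyperplane 1^perp this reads
   y A y^T <= mu |y|^2 with mu = a2^2 / (a1^2 - a2^2) = 1 / (k^2 - 1); and as [Q | 1] has
   only d + 1 < d + 2 columns, some nonzero x in 1^perp has x Q = 0, hence x A = mu x.
   By Courant-Fischer the first fact gives lambda_2 <= mu.  Conversely x changes sign, and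
   since A >= 0 a combination of its positive and negative parts orthogonal to the top
   eigenvector has Rayleigh quotient >= mu, so mu <= lambda_2. *)

From HB Require Import structures.
From mathcomp Require Import all_boot all_order all_algebra.
From mathcomp Require Import reals.
From mathcomp Require Import ring lra.
Set Implicit Arguments. Unset Strict Implicit. Unset Printing Implicit Defensive.
Import Order.TTheory GRing.Theory Num.Theory.
Local Open Scope ring_scope.

Section DotProduct.
Context {R : comNzRingType}.

Definition dotr n (u v : 'rV[R]_n) : R := (u *m v^T) 0 0.

Variable n : nat.
Implicit Types (u v w : 'rV[R]_n) (M : 'M[R]_n).

Lemma dotrE u v : dotr u v = \sum_i u 0 i * v 0 i.
Proof. by rewrite /dotr mxE; apply: eq_bigr => i _; rewrite mxE. Qed.

Lemma mulmx_trE u v : u *m v^T = (dotr u v)%:M.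
Proof. exact: mx11_scalar. Qed.

Lemma dotrC u v : dotr u v = dotr v u.
Proof. by rewrite !dotrE; apply: eq_bigr => i _; rewrite mulrC. Qed.

Lemma dotrDl u v w : dotr (u + v) w = dotr u w + dotr v w.
Proof. by rewrite /dotr mulmxDl mxE. Qed.

Lemma dotrBl u v w : dotr (u - v) w = dotr u w - dotr v w.
Proof. by rewrite /dotr mulmxBl !mxE. Qed.

Lemma dotrNl u w : dotr (- u) w = - dotr u w.
Proof. by rewrite /dotr mulNmx mxE. Qed.

Lemma dotrZl a u w : dotr (a *: u) w = a * dotr u w.
Proof. by rewrite /dotr -scalemxAl mxE. Qed.

Lemma dotrDr u v w : dotr w (u + v) = dotr w u + dotr w v.
Proof. by rewrite !(dotrC w) dotrDl. Qed.

Lemma dotrBr u v w : dotr w (u - v) = dotr w u - dotr w v.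
Proof. by rewrite !(dotrC w) dotrBl. Qed.

Lemma dotrZr a u w : dotr w (a *: u) = a * dotr w u.
Proof. by rewrite !(dotrC w) dotrZl. Qed.

Lemma dotr_mulmxl m (M : 'M[R]_(m, n)) (u : 'rV[R]_m) v :
  dotr (u *m M) v = dotr u (v *m M^T).
Proof. by rewrite /dotr trmx_mul trmxK mulmxA. Qed.

Lemma dotr_mulmx_sym M u v : M^T = M -> dotr (u *m M) v = dotr (v *m M) u.
Proof. by move=> MT; rewrite dotr_mulmxl MT dotrC. Qed.

Lemma dotr_orthomx M u v : M *m M^T = 1%:M -> dotr (u *m M) (v *m M) = dotr u v.
Proof. by move=> MMT; rewrite dotr_mulmxl -mulmxA MMT mulmx1. Qed.

Lemma dotr_polar u v : dotr u v *+ 2 = dotr u u + dotr v v - dotr (u - v) (u - v).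
Proof. by rewrite dotrBl !dotrBr (dotrC v u); ring. Qed.

Lemma dotr_delta u (j : 'I_n) : dotr (delta_mx 0 j) u = u 0 j.
Proof.
rewrite dotrE (bigD1 j) //= big1 => [|i ij]; first by rewrite !mxE !eqxx mul1r addr0.
by rewrite mxE (negPf ij) andbF mul0r.
Qed.

Lemma mulmx_tr_entry m1 m2 (M : 'M[R]_(m1, n)) (N : 'M[R]_(m2, n)) i j :
  (M *m N^T) i j = dotr (row i M) (row j N).
Proof. by rewrite dotrE mxE; apply: eq_bigr => k _; rewrite !mxE. Qed.

End DotProduct.

Section Positivity.
Context {R : realDomainType} {n : nat}.
Implicit Types (u : 'rV[R]_n).

Lemma dotrr_ge0 u : 0 <= dotr u u.
Proof. by rewrite dotrE sumr_ge0 // => i _; rewrite -expr2 sqr_ge0. Qed.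

Lemma dotrr_eq0 u : (dotr u u == 0) = (u == 0).
Proof.
apply/idP/eqP => [|->]; last by rewrite dotrE big1 // => i _; rewrite mxE mul0r.
rewrite dotrE psumr_eq0 => [/allP u0|i _]; last by rewrite -expr2 sqr_ge0.
apply/rowP => i; apply/eqP; rewrite mxE -sqrf_eq0 expr2.
by apply: u0; rewrite mem_index_enum.
Qed.

Lemma dotrr_gt0 u : u != 0 -> 0 < dotr u u.
Proof. by move=> u0; rewrite lt_def dotrr_eq0 u0 dotrr_ge0. Qed.

End Positivity.

Section CharPoly.
Context {R : comNzRingType}.

Lemma char_poly_orthomx_conj n (U A : 'M[R]_n) : U *m U^T = 1%:M ->
  char_poly (U *m A *m U^T) = char_poly A.
Proof.
move=> UUT; rewrite /char_poly /char_poly_mx.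
have -> : 'X%:M - map_mx polyC (U *m A *m U^T) =
    map_mx polyC U *m ('X%:M - map_mx polyC A) *m map_mx polyC U^T.
  rewrite mulmxBr mulmxBl !map_mxM; congr (_ - _).
  by rewrite -mulmxA -scalar_mxC mulmxA -map_mxM UUT map_mx1 mul1mx.
by rewrite !det_mulmx mulrAC -det_mulmx -map_mxM UUT map_mx1 det1 mul1r.
Qed.

Lemma char_poly_block_diag m n (A : 'M[R]_m) (B : 'M[R]_n) :
  char_poly (block_mx A 0 0 B) = char_poly A * char_poly B.
Proof. by rewrite /char_poly char_block_diag_mx det_ublock. Qed.

End CharPoly.

Lemma householder {R : realFieldType} n (w : 'rV[R]_n.+1) : dotr w w = 1 ->
  exists2 H : 'M[R]_n.+1, H *m H^T = 1%:M & delta_mx 0 0 *m H = w.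
Proof.
move=> ww; set e0 : 'rV[R]_n.+1 := delta_mx 0 0.
have [->|wNe0] := eqVneq w e0; first by exists 1%:M; rewrite ?trmx1 mulmx1.
set h := w - e0; set q := dotr h h.
have q_gt0 : 0 < q by rewrite dotrr_gt0 // subr_eq0.
have qE : q = 2 - 2 * w 0 0.
  rewrite /q /h dotrBl !dotrBr ww (dotrC w e0) !dotr_delta !mxE eqxx /=; ring.
set P := h^T *m h.
have PP : P *m P = q *: P.
  by rewrite mulmxA -(mulmxA h^T) mulmx_trE mul_mx_scalar scalemxAl.
have PT : P^T = P by rewrite trmx_mul trmxK.
(* the reflection across the hyperplane orthogonal to h *)
exists (1%:M - (2 / q) *: P).
  have -> : (1%:M - (2 / q) *: P)^T = 1%:M - (2 / q) *: P.
    by rewrite linearB /= linearZ /= PT trmx1.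
  rewrite mulmxBl !mulmxBr !mul1mx mulmx1 -scalemxAr -scalemxAl PP !scalerA.
  have -> : 2 / q * (2 / q) * q = 2 / q + 2 / q by field; rewrite gt_eqF.
  by rewrite scalerDl opprB addrK subrK.
have e0h : dotr e0 h = w 0 0 - 1 by rewrite dotr_delta !mxE eqxx.
rewrite mulmxBr mulmx1 -scalemxAr /P mulmxA mulmx_trE mul_scalar_mx scalerA e0h.
have -> : 2 / q * (w 0 0 - 1) = -1.
  by rewrite qE; field; rewrite -qE gt_eqF.
by rewrite scaleN1r opprK /h addrC subrK.
Qed.

Section Spectral.
Context {R : rcfType}.

Lemma unit_eigenvector n (A : 'M[R]_n) a : eigenvalue A a ->
  exists2 w : 'rV[R]_n, dotr w w = 1 & w *m A = a *: w.
Proof.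
move=> /eigenvalueP[v vA v_neq0]; have v_gt0 := dotrr_gt0 v_neq0.
exists ((Num.sqrt (dotr v v))^-1 *: v); last by rewrite -scalemxAl vA !scalerA mulrC.
rewrite dotrZl dotrZr mulrA -expr2 exprVn sqr_sqrtr ?ltW //.
by rewrite mulVf ?gt_eqF.
Qed.

Lemma symmetric_deflation n (A : 'M[R]_(1 + n)) a : A^T = A -> eigenvalue A a ->
  exists2 H : 'M[R]_(1 + n), H *m H^T = 1%:M &
  exists2 A' : 'M[R]_n, A'^T = A' & H *m A *m H^T = block_mx a%:M 0 0 A'.
Proof.
move=> AT /unit_eigenvector[w ww wA]; have [H HHT e0H] := householder ww.
exists H => //; set B : 'M_(1 + n) := H *m A *m H^T.
have BT : B^T = B by rewrite !trmx_mul trmxK AT mulmxA.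
have e0E : delta_mx 0 0 = row_mx (1%:M : 'M[R]_1) 0 :> 'rV_(1 + n).
  apply/rowP => j; rewrite !mxE; case: splitP => i /= jE.
    by rewrite !mxE -val_eqE /= jE ord1.
  by rewrite !mxE -val_eqE /= jE.
have uB : usubmx B = row_mx a%:M 0.
  have : (delta_mx 0 0 : 'rV_(1 + n)) *m B = a *: (delta_mx 0 0 : 'rV_(1 + n)).
    by rewrite /B !mulmxA e0H wA -scalemxAl -e0H -mulmxA HHT mulmx1.
  rewrite e0E -{1}[B]vsubmxK mul_row_col mul1mx mul0mx addr0 => ->.
  by rewrite scale_row_mx scalemx1 scaler0.
exists (drsubmx B); first by rewrite trmx_drsub BT.
rewrite -{1}[B]submxK /ulsubmx /ursubmx uB row_mxKl row_mxKr; congr block_mx.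
by rewrite -BT -trmx_ursub /ursubmx uB row_mxKr trmx0.
Qed.

Theorem symmetric_spectral n (A : 'M[R]_n) (s : seq R) : A^T = A ->
  char_poly A = \prod_(x <- s) ('X - x%:P) ->
  exists2 U : 'M[R]_n, U *m U^T = 1%:M & U *m A *m U^T = diag_mx (\row_i s`_i).
Proof.
elim: n A s => [|n IHn] A s AT chiA; first by exists 0; apply/matrixP => -[].
have := size_char_poly A; rewrite chiA size_prod_XsubC.
case: s chiA => [//|a s] chiA [size_s].
have : eigenvalue A a by rewrite eigenvalue_root_char chiA root_prod_XsubC mem_head.
case/(symmetric_deflation AT) => H HHT [A' A'T HAHT].
have chiA' : char_poly A' = \prod_(x <- s) ('X - x%:P).
  have chi1 : char_poly (a%:M : 'M_1) = 'X - a%:P.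
    by rewrite /char_poly det_mx11 !mxE /= mulr1n.
  apply: (@mulfI _ ('X - a%:P)); first by rewrite polyXsubC_eq0.
  rewrite -chi1 -char_poly_block_diag -HAHT char_poly_orthomx_conj //.
  by rewrite chiA big_cons chi1.
have [U' U'U'T U'A'] := IHn A' s A'T chiA'.
set W : 'M[R]_(1 + n) := block_mx 1%:M 0 0 U'.
have WWT : W *m W^T = 1%:M.
  rewrite tr_block_mx mulmx_block !trmx0 !trmx1 !mulmx0 !mul0mx !mulmx1 U'U'T.
  by rewrite !addr0 !add0r -scalar_mx_block.
exists (W *m H).
  by rewrite trmx_mul mulmxA -(mulmxA W) HHT mulmx1 WWT.
have -> : W *m H *m A *m (W *m H)^T = W *m (H *m A *m H^T) *m W^T.
  by rewrite trmx_mul !mulmxA.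
rewrite HAHT.
rewrite tr_block_mx !trmx0 !trmx1 !mulmx_block !mulmx0 !mul0mx !mulmx1 !mul1mx.
rewrite !addr0 !add0r U'A'.
have -> : diag_mx (\row_i (a :: s)`_i) =
    block_mx a%:M 0 0 (diag_mx (\row_i s`_i)) :> 'M_(1 + n).
  have -> : a%:M = diag_mx (a%:M : 'rV_1) by apply/matrixP => i j; rewrite !ord1 !mxE.
  rewrite -diag_mx_row; congr diag_mx.
  apply/rowP => j; rewrite !mxE; case: splitP => i ->; rewrite !mxE //.
  by rewrite !ord1 eqxx.
by rewrite mul0mx.
Qed.

End Spectral.

Lemma orthogonal_pair_exists {R : realDomainType} (b0 b1 : R) :
  exists a0 a1 : R, a0 * b0 + a1 * b1 = 0 /\ 0 < a0 ^+ 2 + a1 ^+ 2.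
Proof.
have [->|b0_neq0] := eqVneq b0 0.
  by exists 1, 0; split; [ring | rewrite expr0n expr1n addr0].
exists b1, (- b0); split; first ring.
by rewrite sqrrN ltr_wpDl ?sqr_ge0 // exprn_even_gt0.
Qed.

Lemma row_sum0_pos {R : realDomainType} n (x : 'rV[R]_n) :
  x != 0 -> dotr x (const_mx 1) = 0 -> exists i, 0 < x 0 i.
Proof.
move=> x_neq0 x_sum0.
have [i xi_gt0|x_le0] := pickP (fun i => 0 < x 0 i); first by exists i.
have Nx_ge0 j : 0 <= - x 0 j by rewrite oppr_ge0 leNgt x_le0.
have Nx_sum0 : \sum_j - x 0 j = 0.
  transitivity (- dotr x (const_mx 1)); last by rewrite x_sum0 oppr0.
  by rewrite sumrN dotrE; congr (- _); apply: eq_bigr => j _; rewrite mxE mulr1.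
case/negP: x_neq0; rewrite -oppr_eq0; apply/eqP/rowP => i; rewrite !mxE.
exact: (psumr_eq0P (fun j _ => Nx_ge0 j) Nx_sum0).
Qed.

Lemma row_sum0_neg {R : realDomainType} n (x : 'rV[R]_n) :
  x != 0 -> dotr x (const_mx 1) = 0 -> exists i, x 0 i < 0.
Proof.
move=> x_neq0 x_sum0.
have Nx_sum0 : dotr (- x) (const_mx 1) = 0 by rewrite dotrNl x_sum0 oppr0.
have [|i] := row_sum0_pos _ Nx_sum0; first by rewrite oppr_eq0.
by rewrite mxE oppr_gt0; exists i.
Qed.

Section Rayleigh.
Context {R : rcfType} {n : nat} (A U : 'M[R]_n.+2) (s : seq R).
Hypotheses (UUT : U *m U^T = 1%:M) (UAU : U *m A *m U^T = diag_mx (\row_i s`_i)).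
Hypotheses (s_sorted : sorted (fun x y : R => y <= x) s) (size_s : size s = n.+2).

Lemma dotr_eigenbasis y : dotr y y = \sum_i (y *m U^T) 0 i ^+ 2.
Proof.
have UTU : U^T *m U^T^T = 1%:M by rewrite trmxK mulmx1C.
by rewrite -(dotr_orthomx y y UTU) dotrE; apply: eq_bigr => i _; rewrite expr2.
Qed.

Lemma rayleigh_eigenbasis y : dotr (y *m A) y = \sum_(i < n.+2) s`_i * (y *m U^T) 0 i ^+ 2.
Proof.
set z := y *m U^T; have zU : z *m U = y by rewrite -mulmxA mulmx1C // mulmx1.
have -> : dotr (y *m A) y = dotr (z *m (U *m A *m U^T)) z.
  by rewrite /dotr -{1 2}zU trmx_mul !mulmxA.
rewrite UAU dotrE; apply: eq_bigr => i _; rewrite mul_mx_diag !mxE; ring.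
Qed.

Lemma nth_le_second i : (0 < i < n.+2)%N -> s`_i <= s`_1.
Proof.
by case/andP=> i_gt0 i_lt; apply: (sorted_leq_nth ge_trans ge_refl); rewrite ?inE ?size_s.
Qed.

Lemma second_le_first : s`_1 <= s`_0.
Proof. by apply: (sorted_leq_nth ge_trans ge_refl); rewrite ?inE ?size_s. Qed.

Lemma rayleigh_ge_second_orthogonal (f : 'rV[R]_n.+2) :
  exists2 y : 'rV[R]_n.+2, y != 0 & dotr y f = 0 /\ s`_1 * dotr y y <= dotr (y *m A) y.
Proof.
set b := f *m U^T.
have [a0 [a1 [ab_eq0 a_gt0]]] := orthogonal_pair_exists (b 0 0) (b 0 (lift 0 0)).
(* y = z U lies in the span of the first two eigenvectors *)
set z : 'rV[R]_n.+2 := \row_i [:: a0; a1]`_i.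
have z0 : z 0 0 = a0 by rewrite mxE.
have z1 : z 0 (lift 0 0) = a1 by rewrite mxE.
have z_gt1 (i : 'I_n.+2) : (1 < i)%N -> z 0 i = 0 by move=> i_gt1; rewrite mxE nth_default.
have zUU : z *m U *m U^T = z by rewrite -mulmxA UUT mulmx1.
exists (z *m U); last split.
- apply: contraTneq a_gt0 => /(congr1 (mulmx^~ U^T)); rewrite zUU mul0mx => z_eq0.
  by rewrite -z0 -z1 z_eq0 !mxE expr0n addr0 ltxx.
- rewrite dotr_mulmxl dotrE !big_ord_recl big1 ?addr0 => [|i _]; first by rewrite z0 z1.
  by rewrite z_gt1 ?mul0r.
- rewrite rayleigh_eigenbasis dotr_eigenbasis zUU mulr_sumr; apply: ler_sum => i _.
  have [i_le1|i_gt1] := leqP i 1; last by rewrite z_gt1 // expr0n !mulr0.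
  rewrite ler_wpM2r ?sqr_ge0 //.
  by case: i i_le1 => -[|[|//]] ? _; [exact: second_le_first | rewrite lexx].
Qed.

Lemma rayleigh_le_second y : dotr y (row 0 U) = 0 -> dotr (y *m A) y <= s`_1 * dotr y y.
Proof.
move=> y_orth; rewrite rayleigh_eigenbasis dotr_eigenbasis mulr_sumr; apply: ler_sum => i _.
have [->|i_neq0] := eqVneq i 0; first by rewrite mulmx_tr_entry row_id y_orth expr0n !mulr0.
by rewrite ler_wpM2r ?sqr_ge0 // nth_le_second // lt0n ltn_ord andbT.
Qed.

Lemma eigenvalue_le_second (x : 'rV[R]_n.+2) mu :
  A^T = A -> (forall i j, 0 <= A i j) -> x *m A = mu *: x ->
  (exists i, 0 < x 0 i) -> (exists j, x 0 j < 0) -> mu <= s`_1.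
Proof.
move=> AT A_ge0 xA [i xi_gt0] [j xj_lt0].
set xp : 'rV[R]_n.+2 := \row_k (if 0 <= x 0 k then x 0 k else 0).
set xm : 'rV[R]_n.+2 := \row_k (if 0 <= x 0 k then 0 else - x 0 k).
have xE : x = xp - xm.
  by apply/rowP => k; rewrite !mxE; case: ifP; rewrite ?subr0 ?sub0r ?opprK.
have xp_ge0 k : 0 <= xp 0 k by rewrite mxE; case: ifP.
have xp_xm : dotr xp xm = 0.
  by rewrite dotrE big1 // => k _; rewrite !mxE; case: ifP; rewrite ?mulr0 ?mul0r.
have xp_gt0 : 0 < dotr xp xp.
  apply: dotrr_gt0; apply/negP => /eqP/rowP/(_ i); rewrite !mxE ltW //.
  by move/eqP; rewrite gt_eqF.
have xm_gt0 : 0 < dotr xm xm.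
  apply: dotrr_gt0; apply/negP => /eqP/rowP/(_ j); rewrite !mxE lt_geF //.
  by move/eqP; rewrite oppr_eq0 lt_eqF.
set cc := dotr (xm *m A) xp.
have cc_ge0 : 0 <= cc.
  rewrite /cc dotrE sumr_ge0 // => k _; rewrite mulr_ge0 // mxE sumr_ge0 // => l _.
  by rewrite mulr_ge0 // mxE; case: ifP => // /negbT; rewrite -ltNge oppr_ge0 => /ltW.
have xpA : dotr (xp *m A) xp = mu * dotr xp xp + cc.
  have xpE : xp = x + xm by rewrite xE subrK.
  by rewrite {1}xpE mulmxDl xA dotrDl dotrZl xE dotrBl (dotrC xm) xp_xm subr0.
have xmA : dotr (xm *m A) xm = mu * dotr xm xm + cc.
  have xmE : xm = xp - x by rewrite xE opprB addrC subrK.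
  rewrite {1}xmE mulmxBl xA dotrBl dotrZl (dotr_mulmx_sym _ _ AT) -/cc xE dotrBl xp_xm.
  ring.
have [a0 [a1 [a_orth a_gt0]]] :=
  orthogonal_pair_exists (dotr xp (row 0 U)) (dotr xm (row 0 U)).
set y := a0 *: xp + a1 *: xm.
have yy : dotr y y = a0 ^+ 2 * dotr xp xp + a1 ^+ 2 * dotr xm xm.
  by rewrite !(dotrDl, dotrDr, dotrZl, dotrZr) (dotrC xm) xp_xm; ring.
have yAy : dotr (y *m A) y = mu * dotr y y + cc * (a0 + a1) ^+ 2.
  rewrite yy mulmxDl -!scalemxAl !(dotrDl, dotrDr, dotrZl, dotrZr) xpA xmA.
  by rewrite (dotr_mulmx_sym _ _ AT) -/cc; ring.
have y_gt0 : 0 < dotr y y.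
  rewrite yy; have [P_le_M|M_lt_P] := leP (dotr xp xp) (dotr xm xm).
    apply: lt_le_trans (mulr_gt0 a_gt0 xp_gt0) _.
    by rewrite mulrDl lerD2l ler_wpM2l ?sqr_ge0.
  apply: lt_le_trans (mulr_gt0 a_gt0 xm_gt0) _.
  by rewrite mulrDl lerD2r ler_wpM2l ?sqr_ge0 ?ltW.
have cc_sqr_ge0 : 0 <= cc * (a0 + a1) ^+ 2 by rewrite mulr_ge0 ?sqr_ge0.
rewrite -(ler_pM2r y_gt0) -(lerD2r (cc * (a0 + a1) ^+ 2)) -yAy.
apply: le_trans (rayleigh_le_second _) _; first by rewrite dotrDl !dotrZl.
by rewrite lerDl.
Qed.

End Rayleigh.

Theorem nonneg_symmetric_second_eigenvalue {R : rcfType} n (A : 'M[R]_n.+2) (s : seq R) mu :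
  A^T = A -> (forall i j, 0 <= A i j) ->
  sorted (fun x y : R => y <= x) s -> char_poly A = \prod_(x <- s) ('X - x%:P) ->
  (forall y, dotr y (const_mx 1) = 0 -> dotr (y *m A) y <= mu * dotr y y) ->
  (exists2 x, x != 0 & dotr x (const_mx 1) = 0 /\ x *m A = mu *: x) ->
  s`_1 = mu.
Proof.
move=> AT A_ge0 s_sorted chiA rayleigh_le [x x_neq0 [x_sum0 xA]].
have size_s : size s = n.+2.
  by have := size_char_poly A; rewrite chiA size_prod_XsubC => -[].
have [U UUT UAU] := symmetric_spectral AT chiA.
apply/eqP; rewrite eq_le; apply/andP; split.
  have [y y_neq0 [y_sum0 y_ge]] :=
    rayleigh_ge_second_orthogonal UUT UAU s_sorted size_s (const_mx 1).
  by rewrite -(ler_pM2r (dotrr_gt0 y_neq0)) (le_trans y_ge (rayleigh_le y y_sum0)).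
apply: (eigenvalue_le_second UUT UAU s_sorted size_s AT A_ge0 xA).
  exact: row_sum0_pos.
exact: row_sum0_neg.
Qed.

Lemma exists_nonzero_lker (F : fieldType) m n (M : 'M[F]_(m, n)) :
  (n < m)%N -> exists2 x : 'rV[F]_m, x != 0 & x *m M = 0.
Proof.
move=> n_lt_m; have : kermx M != 0.
  by rewrite -mxrank_eq0 mxrank_ker -lt0n subn_gt0 (leq_ltn_trans (rank_leq_col M)).
by case/rowV0Pn => x /sub_kermxP xM x_neq0; exists x.
Qed.

Section Euclid.
Context {R : realType} {d : nat}.
Implicit Types (x y : 'rV[R]_d).

Lemma edistE x y : edist x y = Num.sqrt (dotr (x - y) (x - y)).
Proof.
by rewrite /edist dotrE; congr Num.sqrt; apply: eq_bigr => i _; rewrite !mxE expr2.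
Qed.

Lemma edist_sqr x y : edist x y ^+ 2 = dotr (x - y) (x - y).
Proof. by rewrite edistE sqr_sqrtr // dotrr_ge0. Qed.

Lemma edist_gt0 x y : x != y -> 0 < edist x y.
Proof. by move=> xy; rewrite edistE sqrtr_gt0 dotrr_gt0 // subr_eq0. Qed.

End Euclid.

Section SphericalTwoDistance.
Context {R : realType} {n d : nat} (e : rel 'I_n) (p : 'I_n -> 'rV[R]_d).
Context (c : 'rV[R]_d) (a1 a2 r : R).
Hypotheses (e_irr : irreflexive e) (a2_gt0 : 0 < a2) (a2_lt_a1 : a2 < a1).
Hypothesis p_dist : forall u v, u != v -> edist (p u) (p v) = if e u v then a1 else a2.
Hypothesis p_sphere : forall v, edist (p v) c = r.

Let t := a1 ^+ 2 - a2 ^+ 2.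
Let Q : 'M[R]_(n, d) := \matrix_v (p v - c).
Let J : 'M[R]_n := const_mx 1.

Let t_gt0 : 0 < t.
Proof. by rewrite subr_gt0 ltr_pXn2r ?nnegrE ?ltW // (lt_trans a2_gt0). Qed.

Lemma gram_sphere :
  Q *m Q^T = r ^+ 2 *: J - (a2 ^+ 2 / 2) *: (J - 1%:M) - (t / 2) *: adjmx R e.
Proof.
apply/matrixP => u v; rewrite mulmx_tr_entry !rowK.
have -> : dotr (p u - c) (p v - c) =
    (edist (p u) c ^+ 2 + edist (p v) c ^+ 2 - edist (p u) (p v) ^+ 2) / 2.
  rewrite !edist_sqr; have -> : p u - p v = (p u - c) - (p v - c).
    by rewrite opprB addrA subrK.
  by rewrite -dotr_polar; field.
rewrite !p_sphere !mxE; have [<-|uv] := eqVneq u v.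
  by rewrite e_irr edist_sqr subrr /dotr mul0mx mxE /=; field.
by rewrite p_dist //; case: (e u v); rewrite /t /=; field.
Qed.

Lemma gram_sphere_sum0 y : dotr y (const_mx 1) = 0 ->
  y *m (Q *m Q^T) = (a2 ^+ 2 / 2) *: y - (t / 2) *: (y *m adjmx R e).
Proof.
move=> y_sum0; have yJ : y *m J = 0.
  apply/rowP => j; rewrite !mxE -[RHS]y_sum0 dotrE.
  by apply: eq_bigr => i _; rewrite !mxE.
rewrite gram_sphere !mulmxBr -!scalemxAr yJ mulmxBr yJ mulmx1.
by rewrite scaler0 !sub0r scalerN opprK.
Qed.

Lemma rayleigh_sphere_sum0 y : dotr y (const_mx 1) = 0 ->
  dotr (y *m adjmx R e) y <= a2 ^+ 2 / t * dotr y y.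
Proof.
move=> y_sum0; have gram_ge0 := dotrr_ge0 (y *m Q).
rewrite dotr_mulmxl dotrC -mulmxA gram_sphere_sum0 // dotrBl !dotrZl in gram_ge0.
by rewrite mulrAC ler_pdivlMr //; lra.
Qed.

Lemma eigenvector_sphere_sum0 : (d.+1 < n)%N ->
  exists2 x, x != 0 & dotr x (const_mx 1) = 0 /\ x *m adjmx R e = a2 ^+ 2 / t *: x.
Proof.
rewrite -addn1 => dn; have [x x_neq0] := exists_nonzero_lker (row_mx Q (const_mx 1)) dn.
rewrite mul_mx_row => /eqP; rewrite row_mx_eq0 => /andP[/eqP xQ /eqP x1].
have x_sum0 : dotr x (const_mx 1) = 0 by rewrite /dotr trmx_const x1 mxE.
exists x => //; split => //.
have := gram_sphere_sum0 x_sum0; rewrite mulmxA xQ mul0mx => /eqP.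
rewrite eq_sym subr_eq0 => /eqP xA.
apply: (@scalerI _ _ (t / 2)); first by rewrite gt_eqF // divr_gt0 // t_gt0.
by rewrite -xA scalerA; congr (_ *: _); field; rewrite gt_eqF // t_gt0.
Qed.

End SphericalTwoDistance.

Lemma spherical_rep_adjmx {R : realType} n d (e : rel 'I_n) (k : R) :
  (d.+1 < n)%N -> irreflexive e -> spherical_rep e d k ->
  [/\ 1 < k,
    forall y, dotr y (const_mx 1) = 0 ->
      dotr (y *m adjmx R e) y <= (k ^+ 2 - 1)^-1 * dotr y y &
    exists2 x, x != 0 &
      dotr x (const_mx 1) = 0 /\ x *m adjmx R e = (k ^+ 2 - 1)^-1 *: x].
Proof.
move=> dn e_irr [p [a1 [a2 [p_inj [a21 [p_two_dist [_ [[u [v [uv puv]]] rep]]]]]]]].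
have [-> [e_dist [c [r [_ p_sphere]]]]] := rep.
have a2_gt0 : 0 < a2 by rewrite -puv edist_gt0 // (inj_eq p_inj).
have p_dist u' v' : u' != v' -> edist (p u') (p v') = if e u' v' then a1 else a2.
  move=> uv'; have [euv|neuv] := boolP (e u' v'); first exact/(e_dist _ _ uv').
  by case: (p_two_dist u' v' uv') => // /(e_dist _ _ uv'); rewrite (negPf neuv).
have t_gt0 : 0 < a1 ^+ 2 - a2 ^+ 2.
  by rewrite subr_gt0 ltr_pXn2r ?nnegrE ?ltW // (lt_trans a2_gt0).
have -> : ((a1 / a2) ^+ 2 - 1)^-1 = a2 ^+ 2 / (a1 ^+ 2 - a2 ^+ 2).
  by field; rewrite !gt_eqF.
split; first by rewrite ltr_pdivlMr // mul1r.
  exact: (rayleigh_sphere_sum0 e_irr a2_gt0 a21 p_dist p_sphere).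
exact: (eigenvector_sphere_sum0 e_irr a2_gt0 a21 p_dist p_sphere).
Qed.

Theorem corollary4p3 (R : realType) (d : nat) (e : rel 'I_(d.+2)) (k : R)
  (s : seq R) :
  simple_graph e ->
  eigenvalues_desc (adjmx R e) s ->
  spherical_rep e d k ->
  k = Num.sqrt (1 / s`_1 + 1) /\ 0 < s`_1.
Proof.
move=> [e_sym e_irr] [s_sorted chiA] /(spherical_rep_adjmx (ltnSn _) e_irr).
case=> k_gt1 rayleigh_le eigen.
have AT : (adjmx R e)^T = adjmx R e by apply/matrixP => i j; rewrite !mxE e_sym.
have A_ge0 i j : 0 <= adjmx R e i j by rewrite mxE ler0n.
rewrite (nonneg_symmetric_second_eigenvalue AT A_ge0 s_sorted chiA rayleigh_le eigen).
have k_gt0 := lt_trans ltr01 k_gt1.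
rewrite invr_gt0 subr_gt0 expr_gt1 ?ltW // div1r invrK subrK sqrtr_sqr ger0_norm ?ltW //.
Qed.
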